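(* Let $E$ be a Banach space, $\mathcal{E}$ the $\sigma$-algebra on $E$ generated by the (open) balls, and $F$ a linear subspace of $E^*$ such that $x\mapsto\langle x,\xi\rangle$ is $\mathcal{E}$-measurable for every $\xi\in F$. Let $\{a_n\}_{n\in\mathbf{N}}$ be a positive sequence with $a_n\to\infty$. Let $\Phi_n,\Phi:E\times F\to\mathbf{R}$ ($n\in\mathbf{N}$) be such that: 1. For all $\xi\in F$, $\Phi_n(\cdot,\xi)$ is $\mathcal{E}$-measurable. 2. For all $\xi\in F$, $\Phi(\cdot,\xi)$ is $\mathcal{E}$-measurable and continuous, and $\Phi(x,0)=0$ for all $x\in E$. 3. For all $\xi\in F$ and all compact $K\subset E$, $b_n(K,\xi):=\sup_{x\in K}|a_n^{-1}\Phi_n(x,a_n\xi)-\Phi(x,\xi)|\to0$ as $n\to\infty$. For each $n$, let $Y_n$ be an $E$-valued $\mathcal{E}$-measurable random vector defined on a probability space $(\Omega_n,\mathcal{A}_n,\mathbf{P}_n)$ (with expectation $\mathbf{E}_n$), and consider: 4. For all $n\in\mathbf{N}$ and $\xi\in F$, $\mathbf{E}_n\exp[\langle Y_n,\xi\rangle-\Phi_n(Y_n,\xi)]=1$. 5. $\{\mathcal{L}_{\mathbf{P}_n}(Y_n)\}_{n\in\mathbf{N}}$ is exponentially tight. Then if 1–4 hold, for every compact $K\subset E$, $$\limsup_n a_n^{-1}\log\mathbf{P}_n\{Y_n\in K\}\le-\inf_{x\in K}\Phi^*(x,x),$$ and if 1–5 hold, for every $A\in\mathcal{E}$, $$\limsup_n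 a_n^{-1}\log\mathbf{P}_n\{Y_n\in A\}\le-\inf_{x\in \bar A}\Phi^*(x,x).$$
   Context: For $x,y\in E$, $\Phi^*(x,y)=\sup_{\xi\in F}[\langle y,\xi\rangle-\Phi(x,\xi)]$. Exponential tightness of $\{\mathcal{L}_{\mathbf{P}_n}(Y_n)\}$ means: for every $b>0$ there is a compact $K\subset E$ with $\limsup_n a_n^{-1}\log\mathbf{P}_n\{Y_n\notin K\}\le -b$. $\bar A$ denotes the closure of $A$. *)

From HB Require Import structures.
From mathcomp Require Import all_boot all_order all_algebra.
From mathcomp Require Import all_classical all_reals all_analysis.
Set Implicit Arguments. Unset Strict Implicit. Unset Printing Implicit Defensive.
Import Order.TTheory GRing.Theory Num.Theory.
Import numFieldNormedType.Exports.
Local Open Scope classical_set_scope.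
Local Open Scope ring_scope.

Definition ball_sigma (R : realType) (E : normedModType R) : set (set E) :=
  <<s [set B | exists (x : E) (r : R), B = ball x r] >>.

Definition Emeasurable_fun (R : realType) (E : normedModType R) (f : E -> R) :=
  forall B : set R, measurable B -> @ball_sigma R E (f @^-1` B).

Definition Emeasurable_rv (R : realType) (E : normedModType R)
  (d : measure_display) (Om : measurableType d) (Y : Om -> E) :=
  forall B : set E, @ball_sigma R E B -> measurable (Y @^-1` B).

Definition dual_elt (R : realType) (E : normedModType R) (xi : E -> R) :=
  [/\ (forall x y, xi (x + y) = xi x + xi y),
      (forall (k : R) x, xi (k *: x) = k * xi x) & continuous xi].

Definition dual_subspace (R : realType) (E : normedModType R) (F : set (E -> R)) :=
  [/\ (forall xi, F xi -> dual_elt xi),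
      F (fun _ => 0),
      (forall xi zeta, F xi -> F zeta -> F (fun x => xi x + zeta x)) &
      (forall (k : R) xi, F xi -> F (fun x => k * xi x))].

Definition elog (R : realType) (x : \bar R) : \bar R :=
  match x with
  | r%:E => if r <= 0 then -oo%E else (ln r)%:E
  | +oo%E => +oo%E
  | -oo%E => -oo%E
  end.

Definition Phistar (R : realType) (E : normedModType R) (F : set (E -> R))
  (Phi : E -> (E -> R) -> R) (x y : E) : \bar R :=
  ereal_sup [set ((xi y - Phi x xi)%:E) | xi in F].

Definition lograte (R : realType) (E : normedModType R)
  (dO : nat -> measure_display) (Om : forall n, measurableType (dO n))
  (P : forall n, probability (Om n) R) (Y : forall n, Om n -> E)
  (a : nat -> R) (S : set E) (n : nat) : \bar R :=
  (((a n)^-1)%:E * elog (P n (Y n @^-1` S)))%E.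

Definition exp_tight (R : realType) (E : normedModType R)
  (dO : nat -> measure_display) (Om : forall n, measurableType (dO n))
  (P : forall n, probability (Om n) R) (Y : forall n, Om n -> E) (a : nat -> R) :=
  forall b : R, 0 < b -> exists K : set E, compact K /\
    (limn_esup (lograte P Y a (~` K)) <= (- b%:E))%E.

From HB Require Import structures.
From mathcomp Require Import all_boot all_order all_algebra.
From mathcomp Require Import all_classical all_reals all_analysis.
From mathcomp Require Import lra finmap measurable_realfun.
Import Order.TTheory GRing.Theory Num.Theory.
Import numFieldNormedType.Exports.
Local Open Scope classical_set_scope.
Local Open Scope ring_scope.

(* Exponential tilting.  For xi in F, hypothesis 4 says that
   exp(<y, a_n xi> - Phi_n(y, a_n xi)) is a probability density for the law of Y_n, so
   by Chebyshev P_n{Y_n in C} <= exp(-a_n inf_C [<y, xi> - a_n^-1 Phi_n(y, a_n xi)]),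
   and by 3 the exponent is a_n(<y, xi> - Phi(y, xi)) + o(a_n) uniformly on compacts.
   Given l < inf_K Phi^*(x, x), every x in K has a xi_x with <x, xi_x> - Phi(x, xi_x) > l,
   hence >= l on a ball around x by continuity; finitely many half-balls cover K, and a
   finite union costs nothing at exponential scale since a_n -> oo.  For A in the ball
   sigma-algebra, exponential tightness gives a compact K_b with
   P_n{Y_n notin K_b} <~ exp(-a_n b), and A is covered by (closure A /\ K_b) \/ ~K_b. *)

Section limn_esup_near.
Context {R : realType}.
Implicit Types (u : (\bar R)^nat) (M : \bar R).
Local Open Scope ereal_scope.

Lemma limn_esup_le_near u M :
  (\forall n \near \oo, u n <= M) -> limn_esup u <= M.
Proof.
move=> uM; rewrite /limn_esup limf_esupE; apply: ge_ereal_inf.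
exists (ereal_sup (u @` [set n | u n <= M])); first by exists [set n | u n <= M].
by apply: ge_ereal_sup => _ [n + <-].
Qed.

Lemma limn_esup_lt_near u M :
  limn_esup u < M -> \forall n \near \oo, u n < M.
Proof.
rewrite /limn_esup limf_esupE => /ereal_inf_lt [_ [V FV <-]] supM.
apply: filterS FV => n Vn; apply: le_lt_trans supM.
by apply: ereal_sup_ubound; exists n.
Qed.

End limn_esup_near.

Lemma lee_oppr_lt (R : realType) (L s : \bar R) :
  (forall l : R, (l%:E < s)%E -> (L <= (- l)%:E)%E) -> (L <= - s)%E.
Proof.
case: s => [r| |] Ls; last by rewrite leey.
- apply/lee_addgt0Pr => e e_gt0.
  have := Ls (r - e); rewrite lte_fin ltrBlDr ltrDl e_gt0 => /(_ isT).
  by rewrite opprB -EFinN -EFinD addrC.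
- case: L Ls => [x| |] Ls; last by rewrite leNye.
  + have := Ls (`|x| + 1) (ltry _); rewrite lee_fin => x_le.
    by exfalso; have := ler_norm (- x); rewrite normrN; lra.
  + by have := Ls 0 (ltry _).
Qed.

Section ball_sigma.
Context {R : realType} {E : normedModType R}.
Implicit Types (K : set E).

Lemma compact_finite_ball_cover K (r : E -> R) :
  compact K -> (forall x, K x -> 0 < r x) ->
  exists s : seq E, [set` s] `<=` K /\
    K `<=` \bigcup_(x in [set` s]) ball x (r x).
Proof.
rewrite compact_cover => cK r_gt0.
have [x _|x Kx|D DK KD] := cK E K (fun x => ball x (r x)).
- exact: ball_open.
- by exists x => //; exact: ballxx (r_gt0 x Kx).
- by exists D; split => // x /DK; rewrite in_setE.
Qed.

Lemma ball_sigma0 : ball_sigma (@set0 E).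
Proof. exact: (@measurable0 _ (g_sigma_algebraType _)). Qed.

Lemma ball_sigmaC (A : set E) : ball_sigma A -> ball_sigma (~` A).
Proof. exact: (@measurableC _ (g_sigma_algebraType _)). Qed.

Lemma ball_sigmaU (A B : set E) :
  ball_sigma A -> ball_sigma B -> ball_sigma (A `|` B).
Proof. exact: (@measurableU _ (g_sigma_algebraType _)). Qed.

Lemma compact_ball_sigma K : compact K -> ball_sigma K.
Proof.
move=> cK.
have inv_gt0 (m : nat) (x : E) : K x -> 0 < m.+1%:R^-1 :> R by rewrite invr_gt0.
have /choice[D DK] m := compact_finite_ball_cover K _ cK (inv_gt0 m).
have -> : K = \bigcap_m \bigcup_(x in [set` D m]) ball x (m.+1%:R^-1).
  apply/seteqP; split => [y Ky m _|y KDy]; first exact: (DK m).2.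
  apply: (compact_closed (@norm_hausdorff _ _) cK).
  move=> B /nbhs_ballP [e /= e_gt0 eB].
  have [N _ /(_ N (leqnn N)) /= Ne] := near_infty_natSinv_lt (PosNum e_gt0).
  have [x /= xD xy] := KDy N I.
  exists x; split; first exact: (DK N).1.
  by apply: eB; apply: (le_ball (ltW Ne)); apply: ball_sym.
apply: (@bigcapT_measurable _ (g_sigma_algebraType _)) => m.
apply: (@fin_bigcup_measurable _ (g_sigma_algebraType _)) => [|x _].
  exact: finite_seq.
by apply: sub_sigma_algebra; exists x, m.+1%:R^-1.
Qed.

End ball_sigma.

Section exp_bound.
Context {R : realType} {E : normedModType R}.
Context {dO : nat -> measure_display} {Om : forall n, measurableType (dO n)}.
Variables (P : forall n, probability (Om n) R) (Y : forall n, Om n -> E).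
Variable a : nat -> R.
Hypothesis a_gt0 : forall n, 0 < a n.

Definition exp_bound (S : set E) (c : R) := forall e : R, 0 < e ->
  \forall n \near \oo, (P n (Y n @^-1` S) <= (expR (a n * (c + e)))%:E)%E.

Lemma exp_boundP S c :
  exp_bound S c <-> (limn_esup (lograte P Y a S) <= c%:E)%E.
Proof.
split=> [Sc|]; last first.
  move=> le_c e e_gt0; have : (limn_esup (lograte P Y a S) < (c + e)%:E)%E.
    by apply: le_lt_trans le_c _; rewrite lte_fin ltrDl.
  move/limn_esup_lt_near; apply: filterS => n; rewrite /lograte.
  case: (P n (Y n @^-1` S)) => [p| |] /=; last by rewrite leNye.
    case: ifPn => [p_le0 _|].
      by rewrite lee_fin (le_trans p_le0) ?ltW ?expR_gt0.
    rewrite -ltNge => p_gt0; rewrite -EFinM lte_fin => lt_p; rewrite lee_fin.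
    by rewrite -[p]lnK ?posrE// ler_expR ltW// -ltr_pdivrMl.
  by rewrite mulry gtr0_sg ?invr_gt0// mul1e.
apply/lee_addgt0Pr => e e_gt0; apply: limn_esup_le_near.
apply: filterS (Sc e e_gt0) => n; rewrite /lograte.
have aNy : (((a n)^-1)%:E * -oo = -oo)%E.
  by rewrite mulrNy gtr0_sg ?invr_gt0// mul1e.
case: (P n (Y n @^-1` S)) => [p| |] //=; last by rewrite aNy => _; exact: leNye.
rewrite lee_fin => p_le; case: ifPn => [_|]; first by rewrite aNy leNye.
rewrite -ltNge => p_gt0; rewrite -EFinM -EFinD lee_fin ler_pdivrMl//.
by rewrite -(expRK (a n * (c + e))) ler_ln ?posrE ?expR_gt0.
Qed.

Lemma exp_bound_le S c c' : c <= c' -> exp_bound S c -> exp_bound S c'.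
Proof.
move=> le_cc' Sc e e_gt0; apply: filterS (Sc e e_gt0) => n /le_trans; apply.
by rewrite lee_fin ler_expR ler_pM2l// lerD2r.
Qed.

Lemma exp_bound_set0 c : exp_bound set0 c.
Proof.
move=> e e_gt0; apply: nearW => n.
by rewrite preimage_set0 measure0 lee_fin ltW ?expR_gt0.
Qed.

Hypothesis Y_meas : forall n, Emeasurable_rv (Y n).

Lemma exp_bound_subset S T c : ball_sigma S -> ball_sigma T ->
  S `<=` T -> exp_bound T c -> exp_bound S c.
Proof.
move=> mS mT ST Tc e e_gt0; apply: filterS (Tc e e_gt0) => n; apply: le_trans.
apply: le_measure => [||w /ST//]; apply/mem_set; [exact: Y_meas _ _ mS|exact: Y_meas _ _ mT].
Qed.

Hypothesis a_cvg : a @ \oo --> +oo.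

(* Since a_n -> oo, the factor 2 of the union bound is absorbed by e/2 in the rate. *)
Lemma exp_bound_setU S T c : ball_sigma S -> ball_sigma T ->
  exp_bound S c -> exp_bound T c -> exp_bound (S `|` T) c.
Proof.
move=> mS mT Sc Tc e e_gt0.
have e2_gt0 : 0 < e / 2 by rewrite divr_gt0.
near=> n.
have a_ge : ln 2 / (e / 2) <= a n.
  by near: n; apply: (proj1 (cvgryPge _) a_cvg).
rewrite preimage_setU; apply: le_trans (measureU2 _ (Y_meas n S mS) (Y_meas n T mT)) _.
apply: le_trans (leeD (_ : _ <= (expR (a n * (c + e / 2)))%:E)%E
                      (_ : _ <= (expR (a n * (c + e / 2)))%:E)%E) _.
- by near: n; exact: Sc.
- by near: n; exact: Tc.
rewrite -EFinD lee_fin.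
have -> : a n * (c + e) = a n * (c + e / 2) + a n * (e / 2).
  by rewrite -mulrDr -addrA -splitr.
rewrite expRD -mulr2n -(mulr_natr (expR _) 2) ler_pM2l ?expR_gt0//.
by rewrite -[X in X <= _](@lnK _ 2) ?posrE// ler_expR -ler_pdivrMr.
Unshelve. all: end_near. Qed.

Lemma exp_bound_bigcup_seq (I : choiceType) (s : seq I) (C : I -> set E) c :
  (forall i, i \in s -> ball_sigma (C i)) -> (forall i, i \in s -> exp_bound (C i) c) ->
  exp_bound (\bigcup_(i in [set` s]) C i) c.
Proof.
rewrite bigcup_seq => mC Cc.
suff : ball_sigma (\big[setU/set0]_(i <- s) C i) /\
       exp_bound (\big[setU/set0]_(i <- s) C i) c by case.
elim: s mC Cc => [|i s IHs] mC Cc.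
  by rewrite big_nil; split; [exact: ball_sigma0|exact: exp_bound_set0].
have s_sub j : j \in s -> j \in i :: s by rewrite in_cons orbC => ->.
have [mU Uc] := IHs (fun j js => mC j (s_sub j js)) (fun j js => Cc j (s_sub j js)).
rewrite big_cons; split; first exact: ball_sigmaU (mC i (mem_head _ _)) mU.
exact: exp_bound_setU (mC i (mem_head _ _)) mU (Cc i (mem_head _ _)) Uc.
Qed.

End exp_bound.

Lemma measurable_fun_comp_rv (R : realType) (E : normedModType R)
    (d : measure_display) (Om : measurableType d) (Y : Om -> E) (g : E -> R) :
  Emeasurable_fun g -> Emeasurable_rv Y -> measurable_fun setT (g \o Y).
Proof. by move=> mg mY _ B mB; rewrite setTI; exact: mY (mg B mB). Qed.

Lemma measure_le_integral (d : measure_display) (T : measurableType d)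
    (R : realType) (mu : measure T R) (D : set T) (f : T -> R) (c : R) :
  measurable D -> measurable_fun setT f -> (forall x, 0 <= f x) ->
  0 <= c -> (forall x, D x -> c <= f x) ->
  (c%:E * mu D <= \int[mu]_x (f x)%:E)%E.
Proof.
move=> mD mf f_ge0 c_ge0 cf; rewrite -integral_cst//.
apply: (@le_trans _ _ (\int[mu]_(x in D) (f x)%:E)%E).
  by apply: ge0_le_integral => //=; exact/measurable_EFinP/measurable_funTS.
apply: ge0_subset_integral => //=; last by move=> x _; rewrite lee_fin.
exact/measurable_EFinP.
Qed.

Section tilting.
Context {R : realType} {E : normedModType R}.
Context {dO : nat -> measure_display} {Om : forall n, measurableType (dO n)}.
Variables (F : set (E -> R)) (a : nat -> R).
Variables (Phin : nat -> E -> (E -> R) -> R) (Phi : E -> (E -> R) -> R).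
Variables (P : forall n, probability (Om n) R) (Y : forall n, Om n -> E).

Definition approx_err n (K : set E) (xi : E -> R) : \bar R :=
  ereal_sup ([set 0%E] `|`
    [set (`| (a n)^-1 * Phin n x (fun y => a n * xi y) - Phi x xi |)%:E | x in K]).

Hypothesis F_sub : dual_subspace F.
Hypothesis F_meas : forall xi, F xi -> Emeasurable_fun xi.
Hypothesis a_gt0 : forall n, 0 < a n.
Hypothesis a_cvg : a @ \oo --> +oo.
Hypothesis Phin_meas : forall n xi, F xi -> Emeasurable_fun (fun x => Phin n x xi).
Hypothesis Phi_approx : forall xi K, F xi -> compact K ->
  (fun n => approx_err n K xi) @ \oo --> 0%E.
Hypothesis Phi_cont : forall xi, F xi -> continuous (fun x => Phi x xi).
Hypothesis Y_meas : forall n, Emeasurable_rv (Y n).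
Hypothesis tilt_integral : forall n xi, F xi ->
  (\int[P n]_w (expR (xi (Y n w) - Phin n (Y n w) xi))%:E)%E = 1%E.

Lemma approx_err_near xi K e : F xi -> compact K -> 0 < e ->
  \forall n \near \oo, forall y, K y ->
    `| (a n)^-1 * Phin n y (fun z => a n * xi z) - Phi y xi | <= e.
Proof.
move=> Fxi cK e_gt0.
have /fine_cvgP [err_fin err_cvg] := Phi_approx xi K Fxi cK.
near=> n => y Ky; rewrite -lee_fin.
apply: (@le_trans _ _ (approx_err n K xi)).
  by apply: ereal_sup_ubound; right; exists y.
have /fineK <- : approx_err n K xi \is a fin_num by near: n.
by rewrite lee_fin ltW//; near: n; exact: (cvgr_lt _ err_cvg _ e_gt0).
Unshelve. all: end_near. Qed.

Lemma exp_bound_tilt xi C l : F xi -> compact C ->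
  (forall y, C y -> l <= xi y - Phi y xi) -> exp_bound P Y a C (- l).
Proof.
move=> Fxi cC l_le e e_gt0; near=> n.
have approx y : C y -> `| (a n)^-1 * Phin n y (fun z => a n * xi z) - Phi y xi | <= e.
  by move: y; near: n; exact: approx_err_near.
pose xiA := fun z => a n * xi z.
have FxiA : F xiA by case: F_sub => _ _ _; apply.
have tilt_ge y : C y -> a n * (l - e) <= xiA y - Phin n y xiA.
  move=> Cy; have := approx y Cy; set t := _ * Phin n y _ => /ler_normlP[t_ge t_le].
  have -> : Phin n y xiA = a n * t by rewrite /t mulVKf ?gt_eqF.
  by rewrite -mulrBr ler_pM2l//; have := l_le y Cy; lra.
have mtilt : measurable_fun setT (fun w => expR (xiA (Y n w) - Phin n (Y n w) xiA)).
  apply: measurableT_comp => //; apply: measurable_funB.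
    exact: measurable_fun_comp_rv (F_meas _ FxiA) (Y_meas n).
  exact: measurable_fun_comp_rv (Phin_meas n _ FxiA) (Y_meas n).
have : ((expR (a n * (l - e)))%:E * P n (Y n @^-1` C) <= 1)%E.
  rewrite -(tilt_integral n xiA FxiA); apply: measure_le_integral => //.
  - exact: Y_meas n C (compact_ball_sigma C cC).
  - by move=> w /tilt_ge; rewrite ler_expR.
case: (P n _) => [p| |] //=; last by rewrite leNye.
  rewrite -EFinM !lee_fin => p_le1.
  have -> : a n * (- l + e) = - (a n * (l - e)) by rewrite -mulrN opprB addrC.
  by rewrite expRN -[_^-1]mulr1 ler_pdivlMl ?expR_gt0.
by rewrite mulry gtr0_sg ?expR_gt0// mul1e.
Unshelve. all: end_near. Qed.

Lemma Phistar_diag_gt_near x l : (l%:E < Phistar F Phi x x)%E ->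
  exists2 xi, F xi & \forall y \near x, l <= xi y - Phi y xi.
Proof.
move=> /ereal_sup_gt[_ [xi Fxi <-]]; rewrite lte_fin => l_lt.
have cont : {for x, continuous (fun y => xi y - Phi y xi)}.
  apply: (@continuousB _ _ _ xi (fun y => Phi y xi)); last exact: Phi_cont.
  by case: F_sub => + _ _ _ => /(_ xi Fxi) [_ _]; apply.
by exists xi => //; apply: filterS (cvgr_gt _ cont _ l_lt) => y /ltW.
Qed.

Lemma exp_bound_compact K l : compact K ->
  (forall x, K x -> (l%:E < Phistar F Phi x x)%E) -> exp_bound P Y a K (- l).
Proof.
move=> cK Kl.
have loc x : exists p : (E -> R) * R, K x ->
    [/\ F p.1, 0 < p.2 & ball x p.2 `<=` [set y | l <= p.1 y - Phi y p.1]].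
  have [Kx|nKx] := pselect (K x); last by exists (fun=> 0, 1) => /nKx.
  have [xi Fxi /nbhs_ballP[r r_gt0 rl]] := Phistar_diag_gt_near x l (Kl x Kx).
  by exists (xi, r).
have [p locp] := choice loc.
pose C x := K `&` closed_ball x ((p x).2 / 2).
have cC x : compact (C x).
  apply: (subclosed_compact _ cK) => [|y []//].
  apply: closedI; last exact: closed_ball_closed.
  exact: compact_closed (@norm_hausdorff _ _) cK.
have [|s [sK Ks]] := compact_finite_ball_cover K (fun x => (p x).2 / 2) cK.
  by move=> x /locp[_ r_gt0 _]; rewrite divr_gt0.
apply: (exp_bound_subset P Y a Y_meas K (\bigcup_(x in [set` s]) C x)).
- exact: compact_ball_sigma.
- by rewrite bigcup_seq; apply: compact_ball_sigma; exact: bigsetU_compact.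
- move=> y Ky; have [x sx xy] := Ks y Ky.
  by exists x => //; split => //; apply: subset_closed_ball.
apply: exp_bound_bigcup_seq => // x sx; first exact: compact_ball_sigma.
have [Fx r_gt0 rl] := locp x (sK x sx).
by apply: (exp_bound_tilt _ _ _ Fx (cC x)) => y [_ /(subset_closure_half r_gt0)/rl].
Qed.

End tilting.

Theorem theorem2p1 (R : realType) (E : completeNormedModType R)
  (F : set (E -> R)) (a : nat -> R)
  (Phin : nat -> E -> (E -> R) -> R) (Phi : E -> (E -> R) -> R)
  (dO : nat -> measure_display) (Om : forall n, measurableType (dO n))
  (P : forall n, probability (Om n) R) (Y : forall n, Om n -> E) :
  dual_subspace F ->
  (forall xi, F xi -> Emeasurable_fun xi) ->
  (forall n, 0 < a n) ->
  a @ \oo --> +oo ->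
  (* 1 *)
  (forall n xi, F xi -> Emeasurable_fun (fun x => Phin n x xi)) ->
  (* 2 *)
  (forall xi, F xi -> Emeasurable_fun (fun x => Phi x xi) /\
                      continuous (fun x => Phi x xi)) ->
  (forall x, Phi x (fun _ => 0) = 0) ->
  (* 3 : b_n(K,xi) -> 0 (sup over K, with the convention sup over empty = 0) *)
  (forall xi K, F xi -> compact K ->
     (fun n => ereal_sup ([set 0%E] `|`
        [set (`| (a n)^-1 * Phin n x (fun y => a n * xi y) - Phi x xi |)%:E
        | x in K])) @ \oo --> 0%E) ->
  (* Y_n measurable *)
  (forall n, Emeasurable_rv (Y n)) ->
  (* 4 *)
  (forall n xi, F xi ->
     (\int[P n]_w (expR (xi (Y n w) - Phin n (Y n w) xi))%:E)%E = 1%E) ->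
  (forall K : set E, compact K ->
     (limn_esup (lograte P Y a K) <= - ereal_inf [set Phistar F Phi x x | x in K])%E)
  /\
  (exp_tight P Y a ->
   forall A : set E, @ball_sigma R E A ->
     (limn_esup (lograte P Y a A)
        <= - ereal_inf [set Phistar F Phi x x | x in closure A])%E).
Proof.
move=> F_sub F_meas a_gt0 a_cvg Phin_meas Phi_meas_cont _ Phi_approx Y_meas tilt.
have Phi_cont xi Fxi : continuous (fun x => Phi x xi) := (Phi_meas_cont xi Fxi).2.
have compact_bound := exp_bound_compact F a Phin Phi P Y F_sub F_meas a_gt0 a_cvg
  Phin_meas Phi_approx Phi_cont Y_meas tilt.
have inf_le S x : S x -> (ereal_inf [set Phistar F Phi x x | x in S] <= Phistar F Phi x x)%E.
  by move=> Sx; apply: ereal_inf_lbound; exists x.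
split=> [K cK|exp_tightY A mA]; apply: lee_oppr_lt => l l_lt; apply/exp_boundP => //.
  by apply: compact_bound => // x /inf_le/(lt_le_trans l_lt).
have [Kb [cKb Kb_tail]] := exp_tightY (`|l| + 1) (ltr_pwDr ltr01 (normr_ge0 l)).
have mKbC := ball_sigmaC _ (compact_ball_sigma _ cKb).
have cAKb : compact (closure A `&` Kb).
  apply: (subclosed_compact _ cKb) => [|y []//].
  exact: closedI (@closed_closure _ _) (compact_closed (@norm_hausdorff _ _) cKb).
have mAKb := compact_ball_sigma _ cAKb.
apply: (exp_bound_subset P Y a Y_meas A ((closure A `&` Kb) `|` ~` Kb)) => //.
- exact: ball_sigmaU.
- move=> y Ay; have [Kby|] := pselect (Kb y); last by right.
  by left; split=> //; exact: subset_closure.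
apply: exp_bound_setU => //.
  by apply: compact_bound => // x [/inf_le/(lt_le_trans l_lt)].
apply: (exp_bound_le P Y a a_gt0 _ (- (`|l| + 1))).
  by rewrite lerN2; have := ler_norm l; lra.
by apply/exp_boundP => //; rewrite EFinN.
Qed.
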